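(* Let $G$ be a graph on $n$ nodes with $m$ edges, and let $k\in\{1,\dots,n\}$ be the index satisfying $\lambda_k(G)>\frac{2m}{n}\ge\lambda_{k+1}(G)$. Then every threshold graph $T$ on $n$ nodes with $m$ edges satisfying $\sum_{i=1}^k d_i^*(T)\ge\sum_{i=1}^k\lambda_i(G)$ also satisfies $LE(T)\ge LE(G)$.
   Context: All graphs are finite and simple. For a graph $G$ on $n$ nodes with $m$ edges, the Laplacian eigenvalues (eigenvalues of $L(G)=D(G)-A(G)$) are $\lambda_1(G)\ge\dots\ge\lambda_n(G)=0$, and the Laplacian energy is $LE(G)=\sum_{i=1}^n\left|\lambda_i(G)-\frac{2m}{n}\right|$. For a graph with degrees $d_1\ge\dots\ge d_n$, the conjugate degrees are $d_i^*=|\{j: d_j\ge i\}|$. A threshold graph is a graph obtainable from the empty graph by repeatedly adding a new node that is either isolated or adjacent to all previously added nodes; for a threshold graph $T$ one has $\lambda_i(T)=d_i^*(T)$ for all $i$. *)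

From HB Require Import structures.
From mathcomp Require Import all_boot all_order all_algebra all_fingroup.
From mathcomp Require Import reals.
Set Implicit Arguments. Unset Strict Implicit. Unset Printing Implicit Defensive.
Import Order.TTheory GRing.Theory Num.Theory.
Local Open Scope ring_scope.

Definition simple_graph (n : nat) (e : rel 'I_n) : Prop :=
  (forall u v, e u v = e v u) /\ (forall u, ~~ e u u).

Definition deg (n : nat) (e : rel 'I_n) (v : 'I_n) : nat := #|[set u | e v u]|.

Definition nedges (n : nat) (e : rel 'I_n) : nat :=
  #|[set p : 'I_n * 'I_n | (p.1 < p.2)%N && e p.1 p.2]|.

Definition lap (R : realType) (n : nat) (e : rel 'I_n) : 'M[R]_n :=
  \matrix_(i, j) (if i == j then (deg e i)%:R else if e i j then -1 else 0).

(* lam = [:: lambda_1; ...; lambda_n] is the list of Laplacian eigenvalues of e,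
   with multiplicity, in non-increasing order. *)
Definition is_lap_spectrum (R : realType) (n : nat) (e : rel 'I_n) (lam : seq R) : Prop :=
  [/\ size lam = n, sorted (fun x y => y <= x) lam &
      char_poly (lap R e) = \prod_(x <- lam) ('X - x%:P)].

Definition avg_deg (R : realType) (n : nat) (e : rel 'I_n) : R :=
  (2 * nedges e)%:R / n%:R.

Definition lap_energy (R : realType) (n : nat) (e : rel 'I_n) (lam : seq R) : R :=
  \sum_(x <- lam) `|x - avg_deg R e|.

Definition conj_deg (n : nat) (e : rel 'I_n) (i : nat) : nat :=
  #|[set j | (i <= deg e j)%N]|.

(* Threshold graph: there is an order of insertion of the nodes (p v = time at
   which v is added) and for each node a flag b v (true = v was adjacent to all
   previously added nodes, false = v was added isolated). *)
Definition threshold (n : nat) (e : rel 'I_n) : Prop :=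
  exists (p : 'S_n) (b : 'I_n -> bool),
    forall u v : 'I_n, (p u < p v)%N -> e u v = b v.

From HB Require Import structures.
From mathcomp Require Import all_boot all_order all_algebra all_fingroup.
From mathcomp Require Import reals.
From mathcomp Require Import zify ring.
Import Order.TTheory GRing.Theory Num.Theory.
Set Implicit Arguments. Unset Strict Implicit. Unset Printing Implicit Defensive.

(* Since the Laplacian eigenvalues sum to 2m, both energies are twice a sum of
   positive deviations from the mean a = 2m/n.  For G the eigenvalues above a
   are exactly lambda_1, ..., lambda_k, so LE(G) = 2 sum_(i <= k) (lambda_i - a).
   For a threshold graph T the Laplacian spectrum is the multiset of conjugate
   degrees: in insertion order the vectors c e_c - (e_0 + ... + e_(c-1)) are
   pairwise orthogonal eigenvectors of L(T), and an induction on the last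
   inserted node matches their eigenvalues with the conjugate degrees.  Hence
   LE(T) = 2 sum_l (d*_l - a)^+ >= 2 sum_(l <= k) (d*_l - a)
         >= 2 sum_(i <= k) (lambda_i - a) = LE(G). *)

(* Nodes are identified with their insertion times 0, ..., n-1, and b s tells
   whether the node inserted at time s was joined to all earlier nodes. *)
Section ThresholdSequence.
Variable b : nat -> bool.

Definition thr_adj (r s : nat) : bool := (r != s) && b (maxn r s).
Definition thr_later (n r : nat) : nat := \sum_(r.+1 <= s < n) b s.
Definition thr_deg (n r : nat) : nat := b r * r + thr_later n r.
Definition thr_eig (n c : nat) : nat :=
  if c == 0 then 0 else b c * c.+1 + thr_later n c.
Definition thr_conj (n l : nat) : nat := \sum_(0 <= r < n) (l <= thr_deg n r).

Lemma thr_adj_lt r s : r < s -> thr_adj r s = b s.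
Proof. by move=> lt_rs; rewrite /thr_adj (ltn_eqF lt_rs) (maxn_idPr (ltnW lt_rs)). Qed.

Lemma thr_adj_gt r s : s < r -> thr_adj r s = b r.
Proof. by move=> lt_sr; rewrite /thr_adj (gtn_eqF lt_sr) (maxn_idPl (ltnW lt_sr)). Qed.

Lemma sum_thr_adj_below r m : m <= r -> \sum_(0 <= s < m) thr_adj r s = m * b r.
Proof.
move=> le_mr; rewrite -[m in RHS]subn0 -sum_nat_const_nat.
by apply: eq_big_nat => s /andP[_ lt_sm]; rewrite thr_adj_gt // (leq_trans lt_sm).
Qed.

Lemma sum_thr_adj_above r m n : r < m ->
  \sum_(m <= s < n) thr_adj r s = \sum_(m <= s < n) b s.
Proof.
by move=> lt_rm; apply: eq_big_nat => s /andP[le_ms _]; rewrite thr_adj_lt // (leq_trans lt_rm).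
Qed.

Lemma thr_degE n r : r < n -> \sum_(0 <= s < n) thr_adj r s = thr_deg n r.
Proof.
move=> lt_rn; rewrite (@big_cat_nat _ _ _ r) ?(ltnW lt_rn) //= (@big_ltn _ _ _ r) //.
by rewrite sum_thr_adj_below // sum_thr_adj_above // /thr_adj eqxx mulnC.
Qed.

Lemma thr_deg_lt n r : r < n -> thr_deg n r < n.
Proof.
move=> lt_rn; have : thr_later n r <= n - r.+1.
  rewrite -[X in X <= _]addn0 -[n - _]muln1 -sum_nat_const_nat.
  by rewrite addn0; apply: leq_sum => s _; apply: leq_b1.
by rewrite /thr_deg; case: (b r); lia.
Qed.

Lemma thr_conj_eq0 n l : n <= l -> thr_conj n l = 0.
Proof.
move=> le_nl; apply: big1_seq => r /andP[_]; rewrite mem_index_iota => /andP[_ lt_rn].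
by rewrite leqNgt (leq_trans (thr_deg_lt lt_rn) le_nl).
Qed.

Lemma thr_later_S n r : r < n -> thr_later n.+1 r = thr_later n r + b n.
Proof. by move=> lt_rn; rewrite /thr_later big_nat_recr. Qed.

Lemma thr_later_last n : thr_later n.+1 n = 0.
Proof. by rewrite /thr_later big_geq. Qed.

Lemma thr_eig_S n c : 0 < c < n -> thr_eig n.+1 c = thr_eig n c + b n.
Proof.
by case/andP=> c_gt0 lt_cn; rewrite /thr_eig (gtn_eqF c_gt0) thr_later_S // addnA.
Qed.

Lemma thr_conj_S n l :
  thr_conj n.+1 l = \sum_(0 <= r < n) (l <= thr_deg n r + b n) + (l <= b n * n).
Proof.
rewrite /thr_conj big_nat_recr //= /thr_deg thr_later_last addn0; congr (_ + _).
by apply: eq_big_nat => r /andP[_ lt_rn]; rewrite thr_later_S // addnA.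
Qed.

Lemma thr_conj0 n : thr_conj n 0 = n.
Proof. by rewrite /thr_conj (eq_bigr (fun _ => 1)) // sum_nat_const_nat muln1 subn0. Qed.

Lemma thr_conj_S_dom n l : b n -> thr_conj n.+1 l.+1 = thr_conj n l + (l < n).
Proof.
move=> bn; rewrite thr_conj_S bn mul1n; congr (_ + _).
by apply: eq_big_nat => r _; rewrite addn1.
Qed.

Lemma thr_conj_S_iso n l : ~~ b n -> 0 < l -> thr_conj n.+1 l = thr_conj n l.
Proof.
move=> /negbTE bn l_gt0; rewrite thr_conj_S bn mul0n leqn0 (gtn_eqF l_gt0) addn0.
by apply: eq_big_nat => r _; rewrite addn0.
Qed.

(* Inserting a last node either raises every degree by one or adds an isolated
   node, and both sides of the identity transform in the same way. *)
Lemma sum_thr_eig_conj (F : nat -> nat) n :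
  \sum_(0 <= c < n) F (thr_eig n c) = \sum_(1 <= l < n.+1) F (thr_conj n l).
Proof.
elim: n F => [|n IH] F; first by rewrite !big_geq.
case: n IH => [|n] IH; first by rewrite !big_nat1 thr_conj_eq0.
set N := n.+1 in IH *.
have IHsplit G : G 0 + \sum_(1 <= c < N) G (thr_eig N c) =
             \sum_(1 <= l < N) G (thr_conj N l) + G 0.
  transitivity (\sum_(0 <= c < N) G (thr_eig N c)); first by rewrite [RHS]big_ltn.
  by rewrite IH big_nat_recr //= thr_conj_eq0.
have -> : \sum_(0 <= c < N.+1) F (thr_eig N.+1 c) =
    F 0 + \sum_(1 <= c < N) F (thr_eig N c + b N) + F (b N * N.+1).
  rewrite big_nat_recr //= big_ltn //; congr (_ + _ + _).
    by apply: eq_big_nat => c c_range; rewrite thr_eig_S.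
  by rewrite /thr_eig thr_later_last addn0.
case: (boolP (b N)) => bN.
- rewrite [RHS]big_ltn // [in RHS]big_add1 /= [in RHS]big_nat_recr //= mul1n.
  rewrite (thr_conj_S_dom 0 bN) thr_conj0 thr_conj_S_dom // ltnn addn0 thr_conj_eq0 // addn1.
  rewrite [in RHS](@eq_big_nat _ _ _ 1 N _ (fun l => F (thr_conj N l).+1)); last first.
    by move=> l /andP[_ lt_lN]; rewrite thr_conj_S_dom // lt_lN addn1.
  under eq_big_nat => c _ do rewrite addn1.
  have := IHsplit (fun x => F x.+1) => /=; lia.
- rewrite [RHS]big_nat_recr //= (thr_conj_eq0 (leqnn _)) mul0n.
  rewrite [in RHS](@eq_big_nat _ _ _ 1 N.+1 _ (fun l => F (thr_conj N l))); last first.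
    by move=> l /andP[l_gt0 _]; rewrite thr_conj_S_iso.
  rewrite [in RHS]big_nat_recr //= (thr_conj_eq0 (leqnn _)).
  under eq_big_nat => c _ do rewrite addn0.
  have := IHsplit F; lia.
Qed.

Lemma thr_eig_perm_conj n :
  perm_eq [seq thr_eig n c | c <- iota 0 n] [seq thr_conj n l | l <- iota 1 n].
Proof.
apply/seq.permP => a; rewrite !count_map -!sumn_count !sumnE !big_map.
by have := sum_thr_eig_conj (fun x => a x) n; rewrite /index_iota subSS !subn0.
Qed.

End ThresholdSequence.

Local Open Scope ring_scope.

Lemma sum_nat_delta (R : pzSemiRingType) n r (g : nat -> R) : (r < n)%N ->
  \sum_(0 <= s < n) (r == s)%:R * g s = g r.
Proof.
move=> lt_rn; rewrite (bigD1_seq r) ?mem_index_iota ?iota_uniq //= eqxx mul1r.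
by rewrite big1 ?addr0 // => s; rewrite eq_sym => /negbTE->; rewrite mul0r.
Qed.

Lemma card_set_sum (T : finType) (P : pred T) : #|[set x | P x]| = (\sum_x P x)%N.
Proof. by rewrite -sum1dep_card big_mkcond; apply: eq_bigr => x _; case: (P x). Qed.

Lemma char_poly_similar (R : idomainType) n (A B P : 'M[R]_n) :
  \det P != 0 -> A *m P = P *m B -> char_poly A = char_poly B.
Proof.
move=> detP_neq0 AP_PB; set Px := map_mx polyC P.
have : char_poly_mx A *m Px = Px *m char_poly_mx B.
  by rewrite /char_poly_mx mulmxBl mulmxBr -map_mxM AP_PB map_mxM scalar_mxC.
move/(congr1 determinant); rewrite !det_mulmx det_map_mx [RHS]mulrC.
by apply: mulIf; rewrite polyC_eq0.
Qed.

Lemma sum_roots_char_poly (R : comNzRingType) n (A : 'M[R]_n) (s : seq R) :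
  char_poly A = \prod_(x <- s) ('X - x%:P) -> \sum_(x <- s) x = \tr A.
Proof.
move=> charA; have size_s : size s = n.
  by have := size_char_poly A; rewrite charA size_prod_XsubC => -[].
case: n A charA size_s => [|n] A charA size_s.
  by rewrite (size0nil size_s) big_nil /mxtrace big_ord0.
by apply: oppr_inj; rewrite -coefPn_prod_XsubC ?size_s // -charA char_poly_trace.
Qed.

Lemma sum_normr_ge (R : realDomainType) (I : Type) (r : seq I) (P : pred I) (y : I -> R) :
  (\sum_(i <- r | P i) y i) *+ 2 - \sum_(i <- r) y i <= \sum_(i <- r) `|y i|.
Proof.
rewrite -sumrMnl big_mkcond -sumrB; apply: ler_sum => i _.
case: (P i); first by rewrite mulr2n addrK ler_norm.
by rewrite sub0r -normrN ler_norm.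
Qed.

Lemma sum_normr_sign (R : realDomainType) (I : eqType) (r : seq I) (P : pred I) (y : I -> R) :
  {in r, forall i, P i -> 0 <= y i} -> {in r, forall i, ~~ P i -> y i <= 0} ->
  \sum_(i <- r) `|y i| = (\sum_(i <- r | P i) y i) *+ 2 - \sum_(i <- r) y i.
Proof.
move=> y_ge0 y_le0; rewrite -sumrMnl [in RHS]big_mkcond -sumrB; apply: eq_big_seq => i i_r.
case: (boolP (P i)) => [Pi | nPi]; first by rewrite mulr2n addrK ger0_norm ?y_ge0.
by rewrite sub0r ler0_norm ?y_le0.
Qed.

Lemma sum_normr_sorted_split (R : realDomainType) (s : seq R) (a : R) k :
  sorted (fun x y => y <= x) s -> (0 < k <= size s)%N ->
  a < nth 0 s k.-1 -> ((k < size s)%N -> nth 0 s k <= a) ->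
  \sum_(x <- s) `|x - a| = (\sum_(i < k) (nth 0 s i - a)) *+ 2 - \sum_(x <- s) (x - a).
Proof.
move=> s_sorted /andP[k_gt0 le_ks] lt_a ge_a.
have nth_mono i j : (i <= j < size s)%N -> nth 0 s j <= nth 0 s i.
  have ge_trans : transitive (fun x y : R => y <= x).
    by move=> y x z le_yx le_zy; apply: le_trans le_zy le_yx.
  case/andP=> le_ij lt_js; apply: (sorted_leq_nth ge_trans (@lexx _ _) 0 s_sorted) => //.
  by rewrite inE (leq_ltn_trans le_ij lt_js).
rewrite (big_nth 0) [in RHS](big_nth 0) (@sum_normr_sign _ _ _ (fun i => i < k)%N).
- by rewrite -(big_mkord xpredT (fun i => nth 0 s i - a)) (big_nat_widen _ _ _ _ _ le_ks).
- move=> i _ lt_ik; rewrite subr_ge0 ltW // (lt_le_trans lt_a) // nth_mono //.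
  by rewrite -ltnS prednK // lt_ik le_ks.
- rewrite /= => i; rewrite mem_index_iota -leqNgt => /andP[_ lt_is] le_ki.
  by rewrite subr_le0 (le_trans _ (ge_a (leq_ltn_trans le_ki lt_is))) // nth_mono ?le_ki.
Qed.

Lemma handshake n (e : rel 'I_n) : simple_graph e ->
  (\sum_v deg e v = 2 * nedges e)%N.
Proof.
move=> [e_sym e_irr]; rewrite /nedges card_set_sum.
rewrite -(pair_bigA _ (fun u v : 'I_n => ((u < v)%N && e u v : nat))).
transitivity
  (\sum_(u : 'I_n) \sum_(v : 'I_n) (((u < v)%N && e u v : nat) + ((v < u)%N && e v u)))%N.
  apply: eq_bigr => u _; rewrite /deg card_set_sum; apply: eq_bigr => v _.
  case: (ltngtP u v) => [_ | _ | /val_inj->] /=; rewrite ?addn0 ?add0n //.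
    by rewrite e_sym.
  by rewrite (negbTE (e_irr v)).
rewrite mul2n -addnn [X in (_ + X)%N]exchange_big -big_split.
by apply: eq_bigr => u _; rewrite -big_split.
Qed.

Lemma mxtrace_lap (R : realType) n (e : rel 'I_n) :
  simple_graph e -> \tr (lap R e) = (2 * nedges e)%:R.
Proof.
move=> e_simple; rewrite /mxtrace -handshake // natr_sum.
by apply: eq_bigr => v _; rewrite mxE eqxx.
Qed.

Lemma sum_lap_spectrum_sub_avg (R : realType) n (e : rel 'I_n) (lam : seq R) :
  simple_graph e -> is_lap_spectrum e lam -> \sum_(x <- lam) (x - avg_deg R e) = 0.
Proof.
move=> e_simple [size_lam _ charL].
have [n0 | n_gt0] := posnP n; first by rewrite (@size0nil _ lam) ?size_lam // big_nil.
rewrite sumrB (sum_roots_char_poly charL) mxtrace_lap // [X in _ - X](big_nth 0).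
rewrite sumr_const_nat subn0 size_lam /avg_deg -[X in _ - X]mulr_natr divfK ?subrr //.
by rewrite pnatr_eq0 -lt0n.
Qed.

Section ThresholdEigenvectors.
Variables (b : nat -> bool) (R : comNzRingType).

Definition thr_vec (c r : nat) : R :=
  if c == 0%N then 1 else c%:R * (r == c)%:R - (r < c)%:R.

Definition thr_lap (n r s : nat) : R :=
  (r == s)%:R * (thr_deg b n r)%:R - (thr_adj b r s)%:R.

Lemma thr_vec_gt c r : (0 < c < r)%N -> thr_vec c r = 0.
Proof.
case/andP=> c_gt0 lt_cr.
by rewrite /thr_vec (gtn_eqF c_gt0) (gtn_eqF lt_cr) ltnNge (ltnW lt_cr) mulr0 subr0.
Qed.

Lemma thr_vec_lt c r : (r < c)%N -> thr_vec c r = -1.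
Proof.
move=> lt_rc; have c_gt0 : (0 < c)%N by apply: leq_ltn_trans lt_rc.
by rewrite /thr_vec (gtn_eqF c_gt0) (ltn_eqF lt_rc) lt_rc mulr0 sub0r.
Qed.

Lemma thr_vec_diag c : (0 < c)%N -> thr_vec c c = c%:R.
Proof. by move=> c_gt0; rewrite /thr_vec (gtn_eqF c_gt0) eqxx ltnn mulr1 subr0. Qed.

Lemma sum_thr_vec_mul c m (f : nat -> R) : (0 < c < m)%N ->
  \sum_(0 <= r < m) thr_vec c r * f r = c%:R * f c - \sum_(0 <= r < c) f r.
Proof.
case/andP=> c_gt0 lt_cm; rewrite (@big_cat_nat _ _ _ c) ?(ltnW lt_cm) //=.
rewrite (@big_ltn _ _ _ c) // [X in _ + (_ + X)]big1_seq => [|r]; last first.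
  by rewrite mem_index_iota => /andP[_ /andP[lt_cr _]]; rewrite thr_vec_gt ?c_gt0 // mul0r.
rewrite thr_vec_diag // addr0 addrC -sumrN; congr (_ + _).
by apply: eq_big_nat => r /andP[_ lt_rc]; rewrite thr_vec_lt // mulN1r.
Qed.

Lemma thr_vec_orthogonal n c c' : (c < c' < n)%N ->
  \sum_(0 <= r < n) thr_vec c r * thr_vec c' r = 0.
Proof.
case/andP=> lt_cc' lt_c'n; have c'_gt0 : (0 < c')%N by apply: leq_ltn_trans lt_cc'.
under eq_big_nat => r _ do rewrite mulrC.
rewrite sum_thr_vec_mul ?c'_gt0 //; case: (posnP c) => [-> | c_gt0].
  by rewrite /thr_vec /= sumr_const_nat subn0 mulr1 subrr.
rewrite thr_vec_gt ?c_gt0 // mulr0 sub0r; apply/eqP; rewrite oppr_eq0; apply/eqP.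
rewrite -(@eq_big_nat _ _ _ 0 c' (fun r => thr_vec c r * 1)) => [|r _]; last by rewrite mulr1.
by rewrite sum_thr_vec_mul ?c_gt0 // sumr_const_nat subn0 mulr1 subrr.
Qed.

Lemma thr_vec_norm n c : (c < n)%N ->
  \sum_(0 <= r < n) thr_vec c r ^+ 2 = (if c == 0%N then n else c * c.+1)%N%:R.
Proof.
move=> lt_cn; case: (posnP c) => [-> | c_gt0].
  rewrite /thr_vec /= (eq_big_nat _ _ (F2 := fun _ => 1)) => [|r _]; last exact: expr1n.
  by rewrite sumr_const_nat subn0.
under eq_big_nat => r _ do rewrite expr2.
rewrite sum_thr_vec_mul ?c_gt0 // thr_vec_diag //.
rewrite (@eq_big_nat _ _ _ 0 c _ (fun _ => -1)) => [|r /andP[_ lt_rc]]; last exact: thr_vec_lt.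
by rewrite sumr_const_nat subn0 mulNrn natrM -natr1; ring.
Qed.

Lemma thr_lap_eigen n r c : (r < n)%N -> (c < n)%N ->
  \sum_(0 <= s < n) thr_lap n r s * thr_vec c s = (thr_eig b n c)%:R * thr_vec c r.
Proof.
move=> lt_rn lt_cn.
have -> : \sum_(0 <= s < n) thr_lap n r s * thr_vec c s =
          (thr_deg b n r)%:R * thr_vec c r -
          \sum_(0 <= s < n) (thr_adj b r s)%:R * thr_vec c s.
  rewrite -(sum_nat_delta (fun s => (thr_deg b n r)%:R * thr_vec c s) lt_rn) -sumrB.
  by apply: eq_big_nat => s _; rewrite mulrBl mulrA.
case: (posnP c) => [-> | c_gt0].
  rewrite /thr_vec /thr_eig /=; under eq_big_nat => s _ do rewrite mulr1.
  by rewrite -natr_sum thr_degE // !mulr1 subrr.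
under eq_big_nat => s _ do rewrite mulrC.
rewrite sum_thr_vec_mul ?c_gt0 // /thr_eig (gtn_eqF c_gt0) -natr_sum.
case: (ltngtP r c) => [lt_rc | lt_cr | ->].
- have deg_split : thr_deg b n r =
      (\sum_(0 <= s < c) thr_adj b r s + (b c + thr_later b n c))%N.
    rewrite -thr_degE // (@big_cat_nat _ _ _ c) ?(ltnW lt_cn) //= (@big_ltn _ _ _ c) //.
    by rewrite (@sum_thr_adj_above b r c.+1 n (ltnW lt_rc)) thr_adj_lt.
  by rewrite deg_split thr_adj_lt // thr_vec_lt // !natrD natrM -natr1; ring.
- rewrite thr_adj_gt // sum_thr_adj_below ?(ltnW lt_cr) // thr_vec_gt ?c_gt0 //.
  by rewrite natrM; ring.
- rewrite sum_thr_adj_below // /thr_adj eqxx /= thr_vec_diag // /thr_deg.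
  by rewrite !natrD !natrM -natr1; ring.
Qed.

End ThresholdEigenvectors.

Section ThresholdGraph.
Variables (R : realType) (n : nat) (T : rel 'I_n) (p : 'S_n) (b : 'I_n -> bool).
Hypotheses (T_simple : simple_graph T)
           (T_thr : forall u v : 'I_n, (p u < p v)%N -> T u v = b v).

Definition ins_flag (i : nat) : bool := [exists u, (p u == i :> nat) && b u].

Lemma ins_flag_perm u : ins_flag (p u) = b u.
Proof.
apply/existsP/idP => [[v /andP[/eqP/val_inj/perm_inj-> //]] | b_u].
by exists u; rewrite eqxx.
Qed.

Lemma T_thr_adj u v : T u v = thr_adj ins_flag (p u) (p v).
Proof.
case: (ltngtP (p u) (p v)) => [lt_uv | lt_vu | /val_inj/perm_inj->].
- by rewrite T_thr // thr_adj_lt // ins_flag_perm.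
- by rewrite T_simple.1 T_thr // thr_adj_gt // ins_flag_perm.
- by rewrite /thr_adj eqxx; apply/negbTE/T_simple.2.
Qed.

Lemma big_perm_nat (V : Type) (idx : V) (op : Monoid.com_law idx) (F : nat -> V) :
  \big[op/idx]_(w : 'I_n) F (p w) = \big[op/idx]_(0 <= s < n) F s.
Proof. by rewrite big_mkord [RHS](reindex_inj (@perm_inj _ p)). Qed.

Lemma deg_thr u : deg T u = thr_deg ins_flag n (p u).
Proof.
rewrite /deg card_set_sum (eq_bigr (fun w => thr_adj ins_flag (p u) (p w) : nat)).
  by rewrite (big_perm_nat _ (fun s => thr_adj ins_flag (p u) s : nat)) thr_degE.
by move=> w _; rewrite T_thr_adj.
Qed.

Lemma conj_deg_thr l : conj_deg T l = thr_conj ins_flag n l.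
Proof.
rewrite /conj_deg card_set_sum (eq_bigr (fun w => (l <= thr_deg ins_flag n (p w))%N : nat)).
  exact: (big_perm_nat _ (fun s => (l <= thr_deg ins_flag n s)%N : nat)).
by move=> w _; rewrite deg_thr.
Qed.

Definition thr_basis : 'M[R]_n := \matrix_(u, c) thr_vec R c (p u).

Definition thr_eig_mx : 'M[R]_n := diag_mx (\row_c (thr_eig ins_flag n c)%:R).

Lemma lap_thr_basis : lap R T *m thr_basis = thr_basis *m thr_eig_mx.
Proof.
apply/matrixP => u c; rewrite mul_mx_diag !mxE.
rewrite (eq_bigr (fun w => thr_lap ins_flag R n (p u) (p w) * thr_vec R c (p w))).
  rewrite (big_perm_nat _ (fun s => thr_lap ins_flag R n (p u) s * thr_vec R c s)).
  by rewrite thr_lap_eigen // mulrC.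
move=> w _; rewrite !mxE /thr_lap (inj_eq val_inj) (inj_eq (@perm_inj _ p)).
rewrite -T_thr_adj -deg_thr.
case: eqP => [-> | _]; first by rewrite (negbTE (T_simple.2 w)) mul1r subr0.
by case: (T u w) => /=; ring.
Qed.

Lemma thr_basis_gram :
  thr_basis^T *m thr_basis = diag_mx (\row_c (if c == 0 :> nat then n else c * c.+1)%N%:R).
Proof.
apply/matrixP => c c'; rewrite !mxE.
rewrite (eq_bigr (fun u => thr_vec R c (p u) * thr_vec R c' (p u))); last first.
  by move=> u _; rewrite !mxE.
rewrite (big_perm_nat _ (fun s => thr_vec R c s * thr_vec R c' s)).
case: (ltngtP c c') => [lt_cc' | lt_c'c | /val_inj->].
- have /negbTE-> : c != c' by rewrite neq_ltn lt_cc'.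
  by rewrite thr_vec_orthogonal ?lt_cc' ?ltn_ord // mulr0n.
- have /negbTE-> : c != c' by rewrite neq_ltn lt_c'c orbT.
  under eq_big_nat => s _ do rewrite mulrC.
  by rewrite thr_vec_orthogonal ?lt_c'c ?ltn_ord // mulr0n.
- by under eq_big_nat => s _ do rewrite -expr2; rewrite thr_vec_norm // eqxx mulr1n.
Qed.

Lemma det_thr_basis : \det thr_basis != 0.
Proof.
have := congr1 determinant thr_basis_gram; rewrite det_mulmx det_tr det_diag => det_gram.
suff : \det thr_basis * \det thr_basis != 0 by rewrite mulf_eq0 orbb.
rewrite det_gram; apply/prodf_neq0 => c _; rewrite mxE pnatr_eq0.
case: (posnP c) => [_ | c_gt0]; last by rewrite -lt0n muln_gt0 c_gt0.
by rewrite -lt0n (leq_ltn_trans _ (ltn_ord c)).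
Qed.

Lemma char_poly_threshold :
  char_poly (lap R T) = \prod_(c < n) ('X - ((thr_eig ins_flag n c)%:R)%:P).
Proof.
rewrite (char_poly_similar det_thr_basis lap_thr_basis) char_poly_trig ?diag_mx_is_trig //.
by apply: eq_bigr => c _; rewrite !mxE eqxx mulr1n.
Qed.

End ThresholdGraph.

Lemma threshold_lap_spectrum (R : realType) n (T : rel 'I_n) (lam : seq R) :
  simple_graph T -> threshold T -> is_lap_spectrum T lam ->
  perm_eq lam [seq (conj_deg T l)%:R | l <- iota 1 n].
Proof.
move=> T_simple [p [b T_thr]] [_ _ charT].
have : perm_eq lam [seq (thr_eig (ins_flag p b) n c)%:R | c <- iota 0 n].
  apply: prod_XsubC_eq; rewrite -charT (char_poly_threshold R T_simple T_thr).
  have iotaE : iota 0 n = index_iota 0 n by rewrite /index_iota subn0.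
  by rewrite big_map iotaE big_mkord.
move/permPl->.
rewrite (eq_map (fun l => congr1 (GRing.natmul 1) (conj_deg_thr T_simple T_thr l))).
have := perm_map (fun x : nat => x%:R : R) (thr_eig_perm_conj (ins_flag p b) n).
by rewrite -!map_comp.
Qed.

Lemma threshold_lap_energy_ge (R : realType) n (T : rel 'I_n) (lam : seq R) k :
  simple_graph T -> threshold T -> is_lap_spectrum T lam -> (k <= n)%N ->
  (\sum_(1 <= l < k.+1) ((conj_deg T l)%:R - avg_deg R T)) *+ 2 <= lap_energy T lam.
Proof.
move=> T_simple T_thr T_spec le_kn.
have lam_perm := threshold_lap_spectrum T_simple T_thr T_spec.
have iotaE : iota 1 n = index_iota 1 n.+1 by rewrite /index_iota subSS subn0.
have dev0 : \sum_(1 <= l < n.+1) ((conj_deg T l)%:R - avg_deg R T) = 0.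
  rewrite -iotaE -(big_map (fun l => (conj_deg T l)%:R) xpredT (fun x => x - avg_deg R T)).
  by rewrite -(perm_big _ lam_perm) (sum_lap_spectrum_sub_avg T_simple T_spec).
have widen : \sum_(1 <= l < k.+1) ((conj_deg T l)%:R - avg_deg R T) =
    \sum_(1 <= l < n.+1 | (l < k.+1)%N) ((conj_deg T l)%:R - avg_deg R T).
  by rewrite (big_nat_widen _ _ _ _ _ (le_kn : k.+1 <= n.+1)%N).
have := sum_normr_ge (index_iota 1 n.+1) (fun l => l < k.+1)%N
                     (fun l => (conj_deg T l)%:R - avg_deg R T).
rewrite dev0 subr0 -widen => /le_trans; apply.
by rewrite /lap_energy (perm_big _ lam_perm) big_map iotaE.
Qed.

Unset Implicit Arguments.

Theorem lemma1 (R : realType) (n : nat) (G : rel 'I_n) (lamG : seq R) (k : nat) :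
  simple_graph G -> is_lap_spectrum G lamG ->
  (1 <= k <= n)%N ->
  avg_deg R G < nth 0 lamG k.-1 ->
  ((k < n)%N -> nth 0 lamG k <= avg_deg R G) ->
  forall (T : rel 'I_n) (lamT : seq R),
    simple_graph T -> threshold T -> nedges T = nedges G ->
    is_lap_spectrum T lamT ->
    \sum_(i < k) nth 0 lamG i <= (\sum_(1 <= i < k.+1) conj_deg T i)%:R ->
    lap_energy G lamG <= lap_energy T lamT.
Proof.
move=> G_simple G_spec k_range lt_a ge_a T lamT T_simple T_thr eq_m T_spec le_sums.
have [size_lamG sorted_lamG _] := G_spec.
have avgT : avg_deg R T = avg_deg R G by rewrite /avg_deg eq_m.
rewrite /lap_energy (sum_normr_sorted_split (k := k) sorted_lamG) ?size_lamG //.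
rewrite (sum_lap_spectrum_sub_avg G_simple G_spec) subr0.
have le_kn : (k <= n)%N by case/andP: k_range.
apply: le_trans (threshold_lap_energy_ge T_simple T_thr T_spec le_kn).
rewrite avgT lerMn2r /= !sumrB sumr_const card_ord sumr_const_nat subSS subn0.
by rewrite -natr_sum lerD2r.
Qed.
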